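(* Let $n\ge1$, $1\le s\le n$, $A_1,\dots,A_s\subset\mathbb Z^n$ finite, $m_1+\dots+m_s=n$ nonnegative integers, and let $b:A_1\sqcup\cdots\sqcup A_s\to\mathbb R$ be a lifting in general position. Let $W\subset A_1\sqcup\cdots\sqcup A_s$ and suppose that $\Xi(W)$ contains a line. Then $V(\mathrm{conv}(A_1),m_1;\dots;\mathrm{conv}(A_s),m_s)=0$.
   Context: A lifting $b$, written $b(i,\mathbf a)$ for $\mathbf a\in A_i$, is in general position if for every subset $S$ of $\{[-\mathrm e_i,\mathbf a,b(i,\mathbf a)]:\mathbf a\in A_i\}\subset\mathbb R^s\times\mathbb R^n\times\mathbb R$ of cardinality at most $n+s+1$, either $S$ is linearly independent or $[0,\dots,0,1]$ is a linear combination of $S$. For $\boldsymbol\xi\in(\mathbb R^n)^*$, $\lambda_i(\boldsymbol\xi)=\max_{\mathbf a\in A_i}(\boldsymbol\xi(\mathbf a)-b(i,\mathbf a))$. For $W\subset A_1\sqcup\cdots\sqcup A_s$, $\Xi(W)=\{\boldsymbol\xi\in\mathbb R^n:\ \forall (i,\mathbf a),\ \mathbf a\boldsymbol\xi-\lambda_i(\boldsymbol\xi)-b(i,\mathbf a)\le0,\ \text{with equality iff }(i,\mathbf a)\in W\}$. $V(K_1,m_1;\dots;K_s,m_s)$ is the mixed volume of the $n$-tuple in which $K_i$ is repeated $m_i$ times, the mixed volume of $(\mathcal K_1,\dots,\mathcal K_n)$ being $\frac1{n!}\frac{\partial^n}{\partial t_1\cdots\partial t_n}\mathrm{Vol}(t_1\mathcal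 K_1+\cdots+t_n\mathcal K_n)$ at $t=0$. *)

From HB Require Import structures.
From mathcomp Require Import all_boot all_order all_algebra.
From mathcomp Require Import all_classical all_reals all_analysis.
Set Implicit Arguments. Unset Strict Implicit. Unset Printing Implicit Defensive.
Import Order.TTheory GRing.Theory Num.Theory numFieldNormedType.Exports.
Local Open Scope classical_set_scope.
Local Open Scope ring_scope.

Section Defs.
Variable R : realType.

(* iint k F g integrates F successively in the coordinates k-1, ..., 0,
   the other coordinates being given by g. *)
Fixpoint iint (k : nat) (F : (nat -> R) -> \bar R) (g : nat -> R) : \bar R :=
  match k with
  | 0 => F g
  | k'.+1 => (\int[@lebesgue_measure R]_x
               iint k' F (fun j => if j == k' then x else g j))%E
  end.

(* d-dimensional Lebesgue volume of K (as an iterated integral, = Lebesgue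
   measure by Fubini-Tonelli for measurable K). *)
Definition vol (d : nat) (K : set 'rV[R]_d) : \bar R :=
  iint d (fun g => (\1_K (\row_(i < d) g i))%:E) (fun _ => 0).

Definition mink_comb (d N : nat) (K : 'I_N -> set 'rV[R]_d) (t : 'rV[R]_N)
  : set 'rV[R]_d :=
  [set x | exists y : 'I_N -> 'rV[R]_d,
     (forall j, exists2 k, K j k & y j = t 0 j *: k) /\ x = \sum_(j < N) y j].

Definition rpartial (N : nat) (F : 'rV[R]_N -> R) (k : 'I_N) (t : 'rV[R]_N) : R :=
  lim ((fun h : R => h^-1 * (F (t + h *: delta_mx 0 k) - F t)) @ 0^'+).

Definition mpartial (N : nat) (F : 'rV[R]_N -> R) (ks : seq 'I_N) : 'rV[R]_N -> R :=
  foldr (fun k G => rpartial G k) F ks.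

(* Mixed volume of an n-tuple of convex bodies in R^n:
   (1/n!) d^n/(dt_1 ... dt_n) Vol(t_1 K_1 + ... + t_n K_n) at t = 0
   (derivatives taken in the orthant t >= 0, where the volume is a polynomial). *)
Definition mixed_volume (d : nat) (K : 'I_d -> set 'rV[R]_d) : R :=
  mpartial (fun t => fine (vol (mink_comb K t))) (enum 'I_d) 0 / (d`!)%:R.

Definition mixed_volume_mult (d s : nat) (K : 'I_s -> set 'rV[R]_d) (m : 'I_s -> nat)
  : R :=
  mixed_volume (fun j : 'I_d =>
    nth set0 (flatten [seq nseq (m i) (K i) | i <- enum 'I_s]) j).

Definition toR (n : nat) (a : 'rV[int]_n) : 'rV[R]_n := map_mx (fun z : int => z%:~R) a.

Definition conv_hull (n : nat) (A : seq 'rV[R]_n) : set 'rV[R]_n :=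
  [set x | exists w : 'I_(size A) -> R,
     (forall j, 0 <= w j) /\ \sum_j w j = 1 /\ x = \sum_j w j *: A`_j].

(* A lifting: b i a is b(i,a) (only its values for a \in A i matter). *)
Definition lift_vec (n s : nat) (b : 'I_s -> 'rV[int]_n -> R) (i : 'I_s) (a : 'rV[int]_n)
  : 'rV[R]_(s + n + 1) :=
  row_mx (row_mx (- delta_mx 0 i) (toR a)) (\row_(j < 1) b i a).

Definition lift_set (n s : nat) (A : 'I_s -> seq 'rV[int]_n)
  (b : 'I_s -> 'rV[int]_n -> R) : seq 'rV[R]_(s + n + 1) :=
  [seq lift_vec b i a | i <- enum 'I_s, a <- A i].

Definition last_unit (m : nat) : 'rV[R]_(m + 1) := row_mx 0 (\row_(j < 1) 1).

Definition general_position (n s : nat) (A : 'I_s -> seq 'rV[int]_n)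
  (b : 'I_s -> 'rV[int]_n -> R) : Prop :=
  forall S : seq 'rV[R]_(s + n + 1),
    uniq S -> {subset S <= lift_set A b} -> (size S <= n + s + 1)%N ->
    free S \/ last_unit (s + n) \in <<S>>%VS.

Definition pairing (n : nat) (xi : 'rV[R]_n) (a : 'rV[int]_n) : R :=
  \sum_(k < n) xi 0 k * (toR a) 0 k.

Definition lambda (n s : nat) (A : 'I_s -> seq 'rV[int]_n)
  (b : 'I_s -> 'rV[int]_n -> R) (i : 'I_s) (xi : 'rV[R]_n) : R :=
  match A i with
  | [::] => 0
  | a0 :: _ => \big[Num.max/(pairing xi a0 - b i a0)]_(a <- A i) (pairing xi a - b i a)
  end.

(* Xi(W), W a subset of the disjoint union, encoded as a set of pairs (i,a) *)
Definition Xi (n s : nat) (A : 'I_s -> seq 'rV[int]_n)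
  (b : 'I_s -> 'rV[int]_n -> R) (W : set ('I_s * 'rV[int]_n)) : set 'rV[R]_n :=
  [set xi | forall i a, a \in A i ->
     pairing xi a - lambda A b i xi - b i a <= 0 /\
     (pairing xi a - lambda A b i xi - b i a = 0 <-> W (i, a))].

Definition contains_line (n : nat) (X : set 'rV[R]_n) : Prop :=
  exists xi0 v : 'rV[R]_n, v != 0 /\ forall t : R, X (xi0 + t *: v).

End Defs.

From HB Require Import structures.
From mathcomp Require Import all_boot all_order all_algebra.
From mathcomp Require Import all_classical all_reals all_analysis.
From mathcomp Require Import ring lra.
Import Order.TTheory GRing.Theory Num.Theory numFieldNormedType.Exports.
Local Open Scope classical_set_scope.
Local Open Scope ring_scope.

(* If xi0 + t v lies in Xi(W) for every t, pick for each i a point w of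
   W ∩ A_i (the maximum defining lambda_i is attained on W); then
   xi(a) - b(i,a) <= xi(w) - b(i,w) along the whole line, an affine inequality
   in t, so v(a) = v(w) for all a in A_i.  Hence every conv(A_i), and with them
   every Minkowski combination t_1 K_1 + ... + t_n K_n, lies in a hyperplane
   orthogonal to v; all these volumes vanish and so do their derivatives. *)

Set Implicit Arguments. Unset Strict Implicit.

Section Hyperplanes.
Variable R : realType.

Definition lform (d : nat) (v x : 'rV[R]_d) : R := \sum_k v 0 k * x 0 k.

Lemma lform_sum d (v : 'rV[R]_d) I (r : seq I) (P : pred I) (F : I -> 'rV[R]_d) :
  lform v (\sum_(i <- r | P i) F i) = \sum_(i <- r | P i) lform v (F i).
Proof.
rewrite /lform exchange_big /=; apply: eq_bigr => k _.
by rewrite summxE mulr_sumr.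
Qed.

Lemma lformZ d (v : 'rV[R]_d) a x : lform v (a *: x) = a * lform v x.
Proof. by rewrite /lform mulr_sumr; apply: eq_bigr => k _; rewrite mxE mulrCA. Qed.

Definition flat d (v : 'rV[R]_d) (K : set 'rV[R]_d) :=
  forall x y, K x -> K y -> lform v x = lform v y.

Lemma flat0 d (v : 'rV[R]_d) : flat v set0.
Proof. by move=> x y []. Qed.

Lemma flat_mink_comb d N (v : 'rV[R]_d) (K : 'I_N -> set 'rV[R]_d) t :
  (forall j, flat v (K j)) -> flat v (mink_comb K t).
Proof.
move=> fK x y [yx [Hx ->]] [yy [Hy ->]]; rewrite !lform_sum.
apply: eq_bigr => j _.
have [kx Kx ->] := Hx j; have [ky Ky ->] := Hy j.
by rewrite !lformZ (fK j kx ky).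
Qed.

Lemma first_nonzero_coord d (v : 'rV[R]_d) : v != 0 ->
  exists k : 'I_d, v 0 k != 0 /\ forall j : 'I_d, (j < k)%N -> v 0 j = 0.
Proof.
case: d v => [|d] v v0; first by move: v0; rewrite thinmx0 eqxx.
have exP : exists k, (k < d.+1)%N && (v 0 (inord k) != 0).
  have [j vj] : exists j, v 0 j != 0.
    apply/existsP; apply: contraR v0 => /existsPn vj0.
    by apply/eqP/rowP => j; rewrite mxE; apply/eqP; move: (vj0 j); rewrite negbK.
  by exists j; rewrite inord_val vj ltn_ord.
case: (ex_minnP exP) => k /andP[kd vk] kmin.
exists (inord k); split=> // j jk; apply/eqP; apply: contraTT jk => vj.
by rewrite -leqNgt inordK //; apply: kmin; rewrite ltn_ord inord_val.
Qed.

Lemma integral_eq0_off_point (f : R -> \bar R) r :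
  (forall x, x != r -> f x = 0%E) -> (\int[lebesgue_measure]_x f x = 0)%E.
Proof.
move=> f0; rewrite -(@integral_setD1 _ _ r); last 2 first.
- exact: measurableD.
- move=> mD Y mY.
  have -> : (setT `\ r) `&` f @^-1` Y = (setT `\ r) `&` (cst 0%E) @^-1` Y.
    apply/seteqP; split=> x [[_ xr] Yx]; split=> //;
      by move: Yx; rewrite /preimage /= f0 //; exact/eqP.
  by rewrite preimage_cst; case: ifPn => _; rewrite ?setIT ?setI0.
by apply: integral0_eq => x [_ xr]; apply: f0; exact/eqP.
Qed.

(* iint k F g only reads the coordinates of g of index >= k. *)
Lemma iint_eq0 k (F : (nat -> R) -> \bar R) g :
  (forall h, (forall j, (k <= j)%N -> h j = g j) -> F h = 0%E) -> iint k F g = 0%E.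
Proof.
elim: k g => [|k IH] g F0 /=; first exact: F0.
rewrite (eq_integral (cst 0%E)) ?integral0 // => x _.
apply: IH => h hg; apply: F0 => j kj.
by rewrite hg ?(ltnW kj) // ifN // neq_ltn kj orbT.
Qed.

Lemma iint_addn_eq0 k l (F : (nat -> R) -> \bar R) :
  (forall g, iint k F g = 0%E) -> forall g, iint (k + l) F g = 0%E.
Proof.
move=> F0; elim: l => [|l IH] g; first by rewrite addn0.
by rewrite addnS /= (eq_integral (cst 0%E)) ?integral0 // => x _; exact: IH.
Qed.

Lemma vol_hyperplane d (K : set 'rV[R]_d) (v : 'rV[R]_d) c :
  v != 0 -> (forall x, K x -> lform v x = c) -> vol K = 0%E.
Proof.
move=> v0 Kc; have [k [vk vlt]] := first_nonzero_coord v0.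
set F := fun g : nat -> R => ((\1_K (\row_(i < d) g i) : R)%:E).
suff Fk : forall g, iint k.+1 F g = 0%E.
  by have := iint_addn_eq0 (d - k.+1) Fk (fun=> 0); rewrite subnKC.
move=> g /=.
set S := \sum_(j < d) (if (k < j)%N then v 0 j * g j else 0).
apply: (@integral_eq0_off_point _ ((c - S) / v 0 k)) => x xr.
apply: iint_eq0 => h hg; rewrite /F indicE.
have [/set_mem /Kc hc|] := boolP (_ \in K); last by [].
have hvS : lform v (\row_i h i) = v 0 k * x + S.
  rewrite /lform /S (bigD1 k) //= [X in _ = _ + X](bigD1 k) //= ltnn add0r.
  rewrite mxE hg // eqxx; congr (_ + _); apply: eq_bigr => j jk; rewrite mxE.
  case: (ltngtP k j) => [kj|jk'|e].
  - by rewrite hg ?ifN // ?(ltnW kj) // neq_ltn kj orbT.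
  - by rewrite vlt // mul0r.
  - by move: jk; rewrite (val_inj e) eqxx.
by move: xr; rewrite -hc hvS addrK mulrC mulKf // eqxx.
Qed.

Lemma vol_flat d (v : 'rV[R]_d) K : v != 0 -> flat v K -> vol K = 0%E.
Proof.
move=> v0 fK; have [[x0 Kx0]|nK] := pselect (exists x, K x).
  by apply: (vol_hyperplane (c := lform v x0) v0) => x Kx; apply: fK.
by apply: (vol_hyperplane (c := 0) v0) => x Kx; case: nK; exists x.
Qed.

Lemma mpartial_cst0 N (ks : seq 'I_N) :
  mpartial (fun _ : 'rV[R]_N => 0) ks = (fun _ => 0).
Proof.
elim: ks => [|k ks IH] //=; rewrite IH; apply/funext => t.
rewrite /rpartial (_ : (fun h : R => _) = cst 0) ?lim_cst //.
by apply/funext => h; rewrite subrr mulr0.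
Qed.

Lemma mixed_volume_flat d (v : 'rV[R]_d) (K : 'I_d -> set 'rV[R]_d) :
  v != 0 -> (forall j, flat v (K j)) -> mixed_volume K = 0.
Proof.
move=> v0 fK; rewrite /mixed_volume (_ : (fun t => _) = cst 0).
  by rewrite mpartial_cst0 mul0r.
by apply/funext => t; rewrite (vol_flat v0 (flat_mink_comb (t := t) fK)).
Qed.

End Hyperplanes.

Lemma nth_flatten_nseq (T : Type) (P : T -> Prop) (x0 : T) I (r : seq I)
    (m : I -> nat) (K : I -> T) j :
  P x0 -> (forall i, P (K i)) -> P (nth x0 (flatten [seq nseq (m i) (K i) | i <- r]) j).
Proof.
move=> P0 PK; elim: r j => [|i r IH] j /=; first by rewrite nth_nil.
by rewrite nth_cat nth_nseq; case: ifP => _; [case: ifP | exact: IH].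
Qed.

Section LinesInXi.
Variables (R : realType) (n s : nat) (A : 'I_s -> seq 'rV[int]_n).
Variable b : 'I_s -> 'rV[int]_n -> R.

Lemma pairingDZ (x y : 'rV[R]_n) t a :
  pairing (x + t *: y) a = pairing x a + t * pairing y a.
Proof.
rewrite /pairing mulr_sumr -big_split; apply: eq_bigr => k _.
by rewrite !mxE mulrDl mulrA.
Qed.

Lemma lform_toR (v : 'rV[R]_n) a : lform v (@toR R n a) = pairing v a.
Proof. by []. Qed.

Lemma bigmax_seq_attained (I : eqType) (f : I -> R) a0 (r : seq I) :
  exists2 a, a \in a0 :: r & \big[Num.max/f a0]_(a <- r) f a = f a.
Proof.
elim: r => [|x r [a ar IH]]; first by exists a0; rewrite ?mem_head ?big_nil.
rewrite big_cons IH; case: leP => _; last by exists x; rewrite ?inE ?eqxx ?orbT.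
by exists a => //; move: ar; rewrite !inE => /orP[]->; rewrite ?orbT.
Qed.

Lemma lambda_attained i (xi : 'rV[R]_n) : A i != [::] ->
  exists2 a, a \in A i & lambda A b i xi = pairing xi a - b i a.
Proof.
rewrite /lambda; case: (A i) => [//|a0 r] _.
have [a ar ->] := bigmax_seq_attained (fun a => pairing xi a - b i a) a0 (a0 :: r).
by exists a => //; move: ar; rewrite inE => /orP[/eqP->|//]; exact: mem_head.
Qed.

Lemma affine_le0_slope0 (c e : R) : (forall t, c + t * e <= 0) -> e = 0.
Proof.
move=> le0; apply/eqP/negP => /negP e0.
by have := le0 ((1 - c) / e); rewrite divfK // addrC subrK ler10.
Qed.

Lemma Xi_line_pairing_const W (xi0 v : 'rV[R]_n) i :
  A i != [::] -> (forall t, Xi A b W (xi0 + t *: v)) ->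
  exists2 w, w \in A i & forall a, a \in A i -> pairing v a = pairing v w.
Proof.
move=> Ai line; have [w wA lw] := lambda_attained (xi0 + 0 *: v) Ai.
have Ww : W (i, w) by apply: (proj1 (line 0 i w wA).2); rewrite lw; ring.
exists w => // a aA; apply/eqP; rewrite -subr_eq0; apply/eqP.
apply: (@affine_le0_slope0 (pairing xi0 a - b i a - pairing xi0 w + b i w)) => t.
have [la _] := line t i a aA; have [_ /(_ Ww) lw'] := (line t i w wA).2.
by move: la lw'; rewrite !pairingDZ mulrBr; lra.
Qed.

Lemma Xi_line_conv_flat W (xi0 v : 'rV[R]_n) i :
  A i != [::] -> (forall t, Xi A b W (xi0 + t *: v)) ->
  flat v (conv_hull [seq @toR R n a | a <- A i]).
Proof.
move=> Ai line; have [w wA vw] := Xi_line_pairing_const Ai line.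
suff vx : forall x, conv_hull [seq @toR R n a | a <- A i] x -> lform v x = pairing v w.
  by move=> x y /vx -> /vx ->.
move=> x [c [_ [c1 ->]]]; rewrite lform_sum.
transitivity (\sum_j c j * pairing v w); last by rewrite -mulr_suml c1 mul1r.
apply: eq_bigr => j _; rewrite lformZ; congr (_ * _).
have jA : (j < size (A i))%N by rewrite -(size_map (@toR R n)) ltn_ord.
by rewrite (nth_map 0) // lform_toR vw // mem_nth.
Qed.

End LinesInXi.

Theorem lemma7p2 (R : realType) (n s : nat) (A : 'I_s -> seq 'rV[int]_n)
  (m : 'I_s -> nat) (b : 'I_s -> 'rV[int]_n -> R) (W : set ('I_s * 'rV[int]_n)) :
  (1 <= n)%N -> (1 <= s)%N -> (s <= n)%N ->
  (forall i, A i != [::]) ->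
  (\sum_(i < s) m i)%N = n ->
  general_position A b ->
  contains_line (Xi A b W) ->
  mixed_volume_mult (fun i => conv_hull [seq @toR R n a | a <- A i]) m = 0.
Proof.
move=> _ _ _ Ane _ _ [xi0 [v [v0 line]]].
apply: (mixed_volume_flat v0) => j.
apply: (nth_flatten_nseq (P := flat v)); first exact: flat0.
by move=> i; exact: Xi_line_conv_flat (Ane i) line.
Qed.
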